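(* Fix $F$ and $\phi$, and let $i$ be any individual with cost $\gamma_i$. If $k_i^*(t,F)=k_1^*(t,F)$ and $t'>t$, then $k_i^*(t',F)=k_1^*(t',F)$.
   Context: Costs $\gamma_i\in\mathbb{R}$ of compliance are distributed according to a continuously differentiable CDF $F$ with log-concave density $f$ of full support on $\mathbb{R}$. For $t\ge0$, define $k_0=k_0^*(t,F)$ and $k_1=k_1^*(t,F)$ implicitly by $k_0=t-\frac{F(k_0)}{f(k_0)}$ and $k_1=t+\frac{1-F(k_1)}{f(k_1)}$. Individual $i$'s optimal $k$ is $k_i^*(t,F)=k_1$ if $\gamma_i\le k_0F(k_0)+k_1(1-F(k_1))+t(F(k_1)-F(k_0))$, and $k_i^*(t,F)=k_0$ otherwise. *)

From Stdlib Require Import Reals.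
From Coquelicot Require Import Coquelicot.
Open Scope R_scope.

Definition admissible_cdf (F f : R -> R) : Prop :=
  (forall x, is_derive F x (f x)) /\
  (forall x, continuous f x) /\
  (forall x, 0 < f x) /\
  is_lim F m_infty 0 /\
  is_lim F p_infty 1 /\
  (forall x y l, 0 <= l <= 1 ->
     l * ln (f x) + (1 - l) * ln (f y) <= ln (f (l * x + (1 - l) * y))).

Definition is_k0star (F f : R -> R) (t k0 : R) : Prop :=
  k0 = t - F k0 / f k0.

Definition is_k1star (F f : R -> R) (t k1 : R) : Prop :=
  k1 = t + (1 - F k1) / f k1.

Definition threshold (F : R -> R) (t k0 k1 : R) : R :=
  k0 * F k0 + k1 * (1 - F k1) + t * (F k1 - F k0).

Definition kistar (F : R -> R) (gamma t k0 k1 : R) : R :=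
  if Rle_dec gamma (threshold F t k0 k1) then k1 else k0.

From Stdlib Require Import Reals Lra.
From Coquelicot Require Import Coquelicot.
Open Scope R_scope.

(* The threshold is [t + max_k (k - t) (1 - F k) + min_k (k - t) F k]: log-concavity
   of [f] makes the Mills ratio [(1 - F) / f] nonincreasing, so the first-order
   conditions defining [k1] and [k0] single out the maximiser and the minimiser.
   Using [k1(s)] as a competitor at [s'] and [k0(s')] as a competitor at [s], the
   threshold grows from [s] to [s'] by at least [(s' - s) (F k1(s) - F k0(s'))], which
   is nonnegative once [k0(s') <= k1(s)], in particular whenever
   [s' - s <= t - k0(t)] and [t <= s]; chaining such steps shows the threshold is
   nondecreasing in [t].  Facts about [k0] are those about [k1] for the reflected
   distribution [1 - F (- x)]. *)

Lemma le_of_derive_nonneg (h dh : R -> R) (a b : R) :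
  (forall x, is_derive h x (dh x)) -> (forall x, a <= x <= b -> 0 <= dh x) ->
  a <= b -> h a <= h b.
Proof.
  intros Hd Hpos Hab.
  destruct (MVT_gen h a b dh) as [c [Hc Hmvt]].
  - intros x _; apply Hd.
  - intros x _; apply continuity_pt_filterlim, (ex_derive_continuous h).
    exists (dh x); apply Hd.
  - rewrite Rmin_left, Rmax_right in Hc by lra.
    assert (0 <= dh c * (b - a)) by (apply Rmult_le_pos; [apply Hpos|]; lra).
    lra.
Qed.

Lemma lim_le_of_derive_nonpos (h dh : R -> R) (a l : R) :
  (forall x, is_derive h x (dh x)) -> (forall x, a <= x -> dh x <= 0) ->
  is_lim h p_infty l -> l <= h a.
Proof.
  intros Hd Hneg Hl.
  apply (is_lim_le_loc h (fun _ => h a) p_infty l (h a)); [|exact Hl|apply is_lim_const].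
  exists a; intros x Hx.
  assert (- h a <= - h x); [|lra].
  apply (le_of_derive_nonneg (fun x => - h x) (fun x => - dh x)).
  - intros y; apply (is_derive_opp h), Hd.
  - intros y Hy; specialize (Hneg y); lra.
  - lra.
Qed.

Lemma is_lim_shift (h : R -> R) (x l : R) :
  is_lim h p_infty l -> is_lim (fun u => h (x + u)) p_infty l.
Proof.
  intros Hl; apply (is_lim_comp h (fun u => x + u) p_infty l p_infty Hl).
  - eapply is_lim_plus; [apply is_lim_const|apply is_lim_id|reflexivity].
  - exists 0; intros; discriminate.
Qed.

Definition mills_ratio (F f : R -> R) (x : R) : R := (1 - F x) / f x.

Section AdmissibleCdf.

Variables F f : R -> R.
Hypothesis HF : admissible_cdf F f.

Let F_deriv x : is_derive F x (f x).
Proof. apply HF. Qed.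

Let f_pos x : 0 < f x.
Proof. apply HF. Qed.

Let F_ex_derive x : ex_derive F x.
Proof. exists (f x); apply F_deriv. Qed.

Let F_continuous : continuity F.
Proof.
  intros x; apply continuity_pt_filterlim, (ex_derive_continuous F).
  exists (f x); apply F_deriv.
Qed.

Let f_continuous : continuity f.
Proof. intros x; apply continuity_pt_filterlim, HF. Qed.

Let Derive_F x : Derive F x = f x.
Proof. apply is_derive_unique, F_deriv. Qed.

Lemma density_shift_ratio x y u : x <= y -> 0 <= u ->
  f (y + u) * f x <= f (x + u) * f y.
Proof.
  intros Hxy Hu. destruct HF as [_ [_ [_ [_ [_ Hlc]]]]].
  destruct (Req_dec u 0) as [->|Hu0]; [rewrite !Rplus_0_r; lra|].
  set (l := (y - x) / (y - x + u)).
  assert (Hl : 0 <= l <= 1).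
  { unfold l; split; [apply Rdiv_le_0_compat; lra|].
    apply (Rdiv_le_1 (y - x) (y - x + u)); lra. }
  pose proof (Hlc x (y + u) l Hl) as Hxu.
  pose proof (Hlc x (y + u) (1 - l) ltac:(lra)) as Hy.
  replace (l * x + (1 - l) * (y + u)) with (x + u) in Hxu by (unfold l; field; lra).
  replace ((1 - l) * x + (1 - (1 - l)) * (y + u)) with y in Hy by (unfold l; field; lra).
  destruct (Rle_or_lt (f (y + u) * f x) (f (x + u) * f y)) as [Hle|Hlt]; [exact Hle|].
  apply ln_increasing in Hlt; [|apply Rmult_lt_0_compat; apply f_pos].
  rewrite !ln_mult in Hlt by apply f_pos. lra.
Qed.

Lemma cdf_le x y : x <= y -> F x <= F y.
Proof.
  apply (le_of_derive_nonneg F f); [apply F_deriv|].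
  intros z _; apply Rlt_le, f_pos.
Qed.

Lemma cdf_lt_1 x : F x < 1.
Proof.
  destruct HF as [_ [_ [_ [_ [F_lim _]]]]].
  assert (Hlt : F x < F (x + 1)).
  { apply (incr_function F m_infty p_infty f); simpl; auto; try lra.
    intros y _ _; apply f_pos. }
  assert (Hle : -1 <= - F (x + 1)).
  { apply (lim_le_of_derive_nonpos (fun x => - F x) (fun x => - f x)).
    - intros y; apply (is_derive_opp F), F_deriv.
    - intros y _; specialize (f_pos y); lra.
    - exact (is_lim_opp F p_infty 1 F_lim). }
  lra.
Qed.

Lemma mills_ratio_pos x : 0 < mills_ratio F f x.
Proof. apply Rdiv_lt_0_compat; [pose proof (cdf_lt_1 x)|]; auto; lra. Qed.

(* [f y (1 - F (x + u)) - f x (1 - F (y + u))] is nonincreasing in [u] by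
   log-concavity and vanishes at infinity. *)
Lemma mills_ratio_antitone x y : x <= y -> mills_ratio F f y <= mills_ratio F f x.
Proof.
  intros Hxy. destruct HF as [_ [_ [_ [_ [F_lim _]]]]].
  set (tails := fun u => f y * (1 - F (x + u)) - f x * (1 - F (y + u))).
  assert (Htails : 0 <= tails 0).
  { apply (lim_le_of_derive_nonpos tails
             (fun u => f x * f (y + u) - f y * f (x + u))).
    - intros u; unfold tails; auto_derive; [repeat split; apply F_ex_derive|].
      rewrite !Derive_F; ring.
    - intros u Hu; pose proof (density_shift_ratio x y u Hxy Hu); lra.
    - assert (Htail : forall z, is_lim (fun u => 1 - F (z + u)) p_infty 0).
      { intros z; replace 0 with (1 - 1) by ring.
        apply is_lim_minus'; [apply is_lim_const|apply is_lim_shift, F_lim]. }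
      replace 0 with (f y * 0 - f x * 0) by ring.
      apply is_lim_minus'; [exact (is_lim_scal_l _ (f y) _ _ (Htail x))|
                            exact (is_lim_scal_l _ (f x) _ _ (Htail y))]. }
  unfold tails, mills_ratio in *; rewrite !Rplus_0_r in Htails.
  apply Rle_div_l; [apply f_pos|].
  replace ((1 - F x) / f x * f y) with ((1 - F x) * f y / f x)
    by (field; apply Rgt_not_eq, f_pos).
  apply Rle_div_r; [apply f_pos|]. lra.
Qed.

Lemma k1star_gt s a : is_k1star F f s a -> s < a.
Proof. pose proof (mills_ratio_pos a); unfold mills_ratio, is_k1star in *; lra. Qed.

Lemma k1star_argmax s a : is_k1star F f s a ->
  forall k, (k - s) * (1 - F k) <= (a - s) * (1 - F a).
Proof.
  intros Ha k.
  assert (Hd : forall z, is_derive (fun k => (k - s) * (1 - F k)) z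
                                   (f z * (mills_ratio F f z - (z - s)))).
  { intros z; auto_derive; [apply F_ex_derive|].
    rewrite Derive_F; unfold mills_ratio; field; apply Rgt_not_eq, f_pos. }
  assert (Ha' : mills_ratio F f a = a - s) by (unfold mills_ratio, is_k1star in *; lra).
  destruct (Rle_or_lt a k) as [Hak|Hka].
  - assert (- ((a - s) * (1 - F a)) <= - ((k - s) * (1 - F k))); [|lra].
    apply (le_of_derive_nonneg (fun k => - ((k - s) * (1 - F k)))
             (fun z => - (f z * (mills_ratio F f z - (z - s))))); [|intros z Hz|lra].
    + intros z; apply (is_derive_opp (fun k => (k - s) * (1 - F k))), Hd.
    + pose proof (mills_ratio_antitone a z (proj1 Hz)); pose proof (f_pos z).
      nra.
  - apply (le_of_derive_nonneg _ _ k a Hd); [intros z Hz|lra].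
    pose proof (mills_ratio_antitone z a (proj2 Hz)); pose proof (f_pos z).
    nra.
Qed.

Lemma k1star_mono s s' a b : s <= s' ->
  is_k1star F f s a -> is_k1star F f s' b -> a <= b.
Proof.
  intros Hs Ha Hb; destruct (Rle_or_lt a b) as [|Hba]; [assumption|].
  pose proof (mills_ratio_antitone b a (Rlt_le _ _ Hba)).
  unfold mills_ratio, is_k1star in *; lra.
Qed.

Lemma k1star_gap_antitone s s' a b : s <= s' ->
  is_k1star F f s a -> is_k1star F f s' b -> b - s' <= a - s.
Proof.
  intros Hs Ha Hb.
  pose proof (mills_ratio_antitone a b (k1star_mono s s' a b Hs Ha Hb)).
  unfold mills_ratio, is_k1star in *; lra.
Qed.

Lemma k1star_exists_between s m s' a b : s <= m <= s' ->
  is_k1star F f s a -> is_k1star F f s' b -> exists c, is_k1star F f m c.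
Proof.
  intros Hm Ha Hb.
  assert (Hcont : continuity (fun k => k - mills_ratio F f k)).
  { intros x; apply (continuity_pt_minus (fun k => k)); [apply continuity_pt_id|].
    apply (continuity_pt_div (fun k => 1 - F k));
      [|apply f_continuous|apply Rgt_not_eq, f_pos].
    apply (continuity_pt_minus (fun _ => 1)); [|apply F_continuous].
    apply continuity_pt_const; intros ? ?; reflexivity. }
  destruct (IVT_gen _ a b m Hcont) as [c [_ Hc]].
  - unfold mills_ratio, is_k1star in *.
    rewrite Rmin_left, Rmax_right; lra.
  - exists c; unfold mills_ratio, is_k1star in *; lra.
Qed.

End AdmissibleCdf.

Lemma admissible_cdf_reflect F f : admissible_cdf F f ->
  admissible_cdf (fun x => 1 - F (- x)) (fun x => f (- x)).
Proof.
  intros [F_deriv [f_cont [f_pos [F_lim_m [F_lim_p f_lc]]]]].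
  assert (HFopp_m : is_lim (fun x => F (- x)) m_infty 1).
  { apply (is_lim_comp F _ m_infty 1 p_infty F_lim_p);
      [exact (is_lim_opp _ m_infty m_infty (is_lim_id m_infty))|].
    exists 0; intros; discriminate. }
  assert (HFopp_p : is_lim (fun x => F (- x)) p_infty 0).
  { apply (is_lim_comp F _ p_infty 0 m_infty F_lim_m);
      [exact (is_lim_opp _ p_infty p_infty (is_lim_id p_infty))|].
    exists 0; intros; discriminate. }
  refine (conj _ (conj _ (conj _ (conj _ (conj _ _))))).
  - intros z; auto_derive; [exists (f (- z)); apply F_deriv|].
    erewrite is_derive_unique; [|apply F_deriv]; ring.
  - intros x; apply (continuous_comp (fun x => - x) f); [|apply f_cont].
    apply continuity_pt_filterlim, (continuity_pt_opp (fun x => x)), continuity_pt_id.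
  - intros x; apply f_pos.
  - replace 0 with (1 - 1) by ring.
    apply is_lim_minus'; [apply is_lim_const|exact HFopp_m].
  - pose proof (is_lim_minus' _ _ p_infty 1 0 (is_lim_const 1 p_infty) HFopp_p) as H.
    rewrite Rminus_0_r in H; exact H.
  - intros x y l Hl.
    replace (- (l * x + (1 - l) * y)) with (l * - x + (1 - l) * - y) by ring.
    apply f_lc, Hl.
Qed.

Lemma is_k0star_reflect F f t k : is_k0star F f t k ->
  is_k1star (fun x => 1 - F (- x)) (fun x => f (- x)) (- t) (- k).
Proof.
  unfold is_k0star, is_k1star; rewrite Ropp_involutive.
  replace (1 - (1 - F k)) with (F k) by ring; lra.
Qed.

Section LowerTail.

Variables F f : R -> R.
Hypothesis HF : admissible_cdf F f.

Let HFr := admissible_cdf_reflect F f HF.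

Lemma k0star_lt s a : is_k0star F f s a -> a < s.
Proof.
  intros Ha; pose proof (k1star_gt _ _ HFr _ _ (is_k0star_reflect _ _ _ _ Ha)); lra.
Qed.

Lemma k0star_argmin s a : is_k0star F f s a ->
  forall k, (a - s) * F a <= (k - s) * F k.
Proof.
  intros Ha k.
  pose proof (k1star_argmax _ _ HFr _ _ (is_k0star_reflect _ _ _ _ Ha) (- k)) as H.
  cbv beta in H; rewrite !Ropp_involutive in H; nra.
Qed.

Lemma k0star_gap_mono s s' a b : s <= s' ->
  is_k0star F f s a -> is_k0star F f s' b -> s - a <= s' - b.
Proof.
  intros Hs Ha Hb.
  pose proof (k1star_gap_antitone _ _ HFr (- s') (- s) (- b) (- a) ltac:(lra)
                (is_k0star_reflect _ _ _ _ Hb) (is_k0star_reflect _ _ _ _ Ha)).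
  lra.
Qed.

Lemma k0star_exists_between s m s' a b : s <= m <= s' ->
  is_k0star F f s a -> is_k0star F f s' b -> exists c, is_k0star F f m c.
Proof.
  intros Hm Ha Hb.
  destruct (k1star_exists_between _ _ HFr (- s') (- m) (- s) (- b) (- a) ltac:(lra)
              (is_k0star_reflect _ _ _ _ Hb) (is_k0star_reflect _ _ _ _ Ha)) as [c Hc].
  exists (- c); unfold is_k0star, is_k1star in *.
  replace (1 - (1 - F (- c))) with (F (- c)) in Hc by ring; lra.
Qed.

End LowerTail.

Section Threshold.

Variables F f : R -> R.
Hypothesis HF : admissible_cdf F f.

Lemma threshold_le_of_k0star_le_k1star s s' a0 a1 b0 b1 : s <= s' ->
  is_k0star F f s a0 -> is_k1star F f s a1 ->
  is_k0star F f s' b0 -> is_k1star F f s' b1 -> b0 <= a1 ->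
  threshold F s a0 a1 <= threshold F s' b0 b1.
Proof.
  intros Hs Ha0 Ha1 Hb0 Hb1 Hba.
  pose proof (k1star_argmax _ _ HF _ _ Hb1 a1).
  pose proof (k0star_argmin _ _ HF _ _ Ha0 b0).
  pose proof (cdf_le _ _ HF _ _ Hba).
  assert (0 <= (s' - s) * (F a1 - F b0)) by (apply Rmult_le_pos; lra).
  unfold threshold; nra.
Qed.

Lemma threshold_le_near t c0 s s' a0 a1 b0 b1 :
  is_k0star F f t c0 -> t <= s -> s <= s' -> s' - s <= t - c0 ->
  is_k0star F f s a0 -> is_k1star F f s a1 ->
  is_k0star F f s' b0 -> is_k1star F f s' b1 ->
  threshold F s a0 a1 <= threshold F s' b0 b1.
Proof.
  intros Hc0 Hts Hs Hnear Ha0 Ha1 Hb0 Hb1.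
  apply (threshold_le_of_k0star_le_k1star s s' a0 a1 b0 b1); auto.
  (* the gap [s - k0(s)] grows with [s], so [b0 <= s' - (t - c0) <= s < a1] *)
  pose proof (k0star_gap_mono _ _ HF t s' c0 b0 ltac:(lra) Hc0 Hb0).
  pose proof (k1star_gt _ _ HF _ _ Ha1).
  lra.
Qed.

Lemma threshold_le_steps t c0 (n : nat) : is_k0star F f t c0 ->
  forall s s' a0 a1 b0 b1, t <= s -> s <= s' -> s' - s <= INR n * (t - c0) ->
  is_k0star F f s a0 -> is_k1star F f s a1 ->
  is_k0star F f s' b0 -> is_k1star F f s' b1 ->
  threshold F s a0 a1 <= threshold F s' b0 b1.
Proof.
  intros Hc0; pose proof (k0star_lt _ _ HF _ _ Hc0).
  induction n as [|n IH]; intros s s' a0 a1 b0 b1 Hts Hs Hn Ha0 Ha1 Hb0 Hb1.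
  - apply (threshold_le_near t c0); auto; simpl in Hn; lra.
  - destruct (Rle_or_lt (s' - s) (t - c0)) as [Hnear|Hfar].
    + apply (threshold_le_near t c0); auto.
    + set (m := s + (t - c0)).
      destruct (k0star_exists_between _ _ HF s m s' a0 b0 ltac:(unfold m; lra) Ha0 Hb0)
        as [c0m Hc0m].
      destruct (k1star_exists_between _ _ HF s m s' a1 b1 ltac:(unfold m; lra) Ha1 Hb1)
        as [c1m Hc1m].
      apply (Rle_trans _ (threshold F m c0m c1m)).
      * apply (threshold_le_near t c0); auto; unfold m; lra.
      * rewrite S_INR in Hn; apply IH; auto; unfold m; lra.
Qed.

Lemma threshold_mono t t' k0 k1 k0' k1' : t <= t' ->
  is_k0star F f t k0 -> is_k1star F f t k1 ->
  is_k0star F f t' k0' -> is_k1star F f t' k1' ->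
  threshold F t k0 k1 <= threshold F t' k0' k1'.
Proof.
  intros Ht H0 H1 H0' H1'.
  pose proof (k0star_lt _ _ HF _ _ H0).
  destruct (INR_archimed (t - k0) (t' - t) ltac:(lra)) as [n Hn].
  apply (threshold_le_steps t k0 n); auto; lra.
Qed.

End Threshold.

Theorem proposition6 (F f : R -> R) (gamma t t' k0 k1 k0' k1' : R) :
  admissible_cdf F f ->
  0 <= t -> t < t' ->
  is_k0star F f t k0 -> is_k1star F f t k1 ->
  is_k0star F f t' k0' -> is_k1star F f t' k1' ->
  kistar F gamma t k0 k1 = k1 ->
  kistar F gamma t' k0' k1' = k1'.
Proof.
  intros HF _ Ht H0 H1 H0' H1'.
  pose proof (threshold_mono _ _ HF t t' k0 k1 k0' k1' (Rlt_le _ _ Ht) H0 H1 H0' H1').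
  unfold kistar.
  destruct (Rle_dec gamma (threshold F t k0 k1)) as [Hle|Hgt].
  - destruct (Rle_dec gamma (threshold F t' k0' k1')); [reflexivity|lra].
  - pose proof (k0star_lt _ _ HF _ _ H0); pose proof (k1star_gt _ _ HF _ _ H1).
    intros Hk; lra.
Qed.
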